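(* Let $X$ be a separable Banach space over $\mathbb{K}\in\{\mathbb{R},\mathbb{C}\}$ and $T\colon X\to X$ a bounded linear operator. Then $\mathrm{Prox}_k(T)$ is dense in $X^k$ for every $k\geq 2$ if and only if there exist a sequence $\{p_n\}$ in $\mathbb{N}$ and a dense subset $K$ of $X$ such that $\lim_{n\to\infty}T^{p_n}x=0$ for every $x\in K$.
   Context: For $k\geq 2$, $\mathrm{Prox}_k(T)=\{(x_1,\dots,x_k)\in X^k: \liminf_{n\to\infty}\max_{1\leq i<j\leq k}\|T^nx_i-T^nx_j\|=0\}$. *)

From HB Require Import structures.
From mathcomp Require Import all_boot all_order all_algebra.
From mathcomp Require Import all_classical all_reals all_analysis.
From mathcomp Require Export complex.
Import numFieldNormedType.Exports.
Import Order.TTheory GRing.Theory Num.Theory.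

Set Implicit Arguments.
Unset Strict Implicit.
Unset Printing Implicit Defensive.

Local Open Scope classical_set_scope.
Local Open Scope ring_scope.

Definition separable (X : topologicalType) : Prop :=
  exists D : set X, countable D /\ dense D.

Definition bounded_op (K : numDomainType) (X : normedModType K)
  (T : X -> X) : Prop :=
  exists M : K, forall x : X, `|T x| <= M * `|x|.

Definition prox_maxdist (K : numDomainType) (X : normedModType K)
  (k : nat) (T : X -> X) (x : 'I_k -> X) (n : nat) : K :=
  \big[Num.max/0]_(i < k) \big[Num.max/0]_(j < k | (i < j)%N)
     `|iter n T (x i) - iter n T (x j)|.

Arguments prox_maxdist {K X} k T x n.

(* Prox_k(T) = { (x_1..x_k) : liminf_n max_{i<j} |T^n x_i - T^n x_j| = 0 },
   as a subset of X^k, here the space 'I_k -> X with the product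
   (pointwise) topology. *)
Definition Prox (R : realType) (X : normedModType R) (k : nat) (T : X -> X)
  : set {ptws 'I_k -> X} :=
  [set x | limn_einf (fun n => (prox_maxdist k T x n)%:E) = 0%E].

(* Same for scalars in C = R[i]; the norm of X is R[i]-valued but real
   (nonnegative), so we take its real part ('Re). *)
Definition ProxC (R : realType) (X : normedModType R[i]) (k : nat)
  (T : X -> X) : set {ptws 'I_k -> X} :=
  [set x | limn_einf (fun n => (complex.Re (prox_maxdist k T x n))%:E) = 0%E].

Arguments Prox {R X} k T.
Arguments ProxC {R X} k T.

(* (<=) Pick points of the dense set S near the given k-tuple: along the times
   p_n all of them tend to 0, hence so do their pairwise distances, and the
   bound |T^n| <= C^n carries this smallness to arbitrarily late times.
   (=>) Density of proximal (M+2)-tuples near (a_0, ..., a_(M-1), 0, 0) lets one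
   move finitely many points slightly so that one common iterate T^n maps all
   of them near 0 (subtract the last coordinate, which is itself near 0).
   Starting from a sequence that visits every ball infinitely often, apply this
   to the first m+1 points at stage m, with perturbation radii shrinking fast
   enough to beat C^(n_m); each coordinate is then a Cauchy sequence, and the
   limits form a dense set on which T^(n_m) tends to 0. *)

From HB Require Import structures.
From mathcomp Require Import all_boot all_order all_algebra.
From mathcomp Require Import all_classical all_reals all_analysis.
From mathcomp Require Import complex.
From mathcomp Require Import ring.
Import numFieldNormedType.Exports.
Import Order.TTheory GRing.Theory Num.Theory.

Set Implicit Arguments.
Unset Strict Implicit.
Unset Printing Implicit Defensive.
Local Open Scope classical_set_scope.
Local Open Scope ring_scope.

Section BigmaxNonneg.
Variable K : numDomainType.

Lemma bigmax_ge0 (I : Type) (r : seq I) (P : pred I) (f : I -> K) :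
  (forall i, P i -> 0 <= f i) -> 0 <= \big[Num.max/0]_(i <- r | P i) f i.
Proof.
move=> f_ge0; elim/big_ind: _ => //= x y x_ge0 y_ge0.
by rewrite comparable_le_max ?x_ge0 // real_comparable // ger0_real.
Qed.

Lemma le_bigmax_ge0 (I : eqType) (r : seq I) (P : pred I) (f : I -> K) i0 :
  (forall i, P i -> 0 <= f i) -> i0 \in r -> P i0 ->
  f i0 <= \big[Num.max/0]_(i <- r | P i) f i.
Proof.
move=> f_ge0; elim: r => [//|a r IH].
rewrite inE big_cons => /orP[/eqP <-|i0r] Pi0.
  rewrite Pi0 comparable_le_max ?lexx // real_comparable ?ger0_real ?f_ge0 //.
  exact: bigmax_ge0.
case: ifP => Pa; last exact: IH.
rewrite comparable_le_max ?IH ?orbT // real_comparable ?ger0_real ?f_ge0 //.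
exact: bigmax_ge0.
Qed.

End BigmaxNonneg.

Section ProxMaxdist.
Variables (K : numFieldType) (X : normedModType K) (T : {linear X -> X}).

Lemma iterB n x y : iter n T (x - y) = iter n T x - iter n T y.
Proof. by elim: n => //= n ->; rewrite linearB. Qed.

Lemma bounded_op_iter : bounded_op T ->
  exists2 C : K, 1 <= C & forall n x, `|iter n T x| <= C ^+ n * `|x|.
Proof.
move=> [M TM]; exists (`|M| + 1); first by rewrite lerDr.
have T_le x : `|T x| <= (`|M| + 1) * `|x|.
  have Mx_ge0 : 0 <= M * `|x| by exact: le_trans (TM x).
  apply: le_trans (TM x) _; rewrite -(ger0_norm Mx_ge0) normrM normr_id.
  by rewrite ler_wpM2r ?lerDl.
elim=> [|n IH] x /=; first by rewrite expr0 mul1r.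
by apply: le_trans (T_le _) _; rewrite exprS -mulrA ler_wpM2l ?addr_ge0.
Qed.

Variable k : nat.
Implicit Types (x : 'I_k -> X) (n : nat).

Lemma prox_maxdist_ge0 x n : 0 <= prox_maxdist k T x n.
Proof. by apply: bigmax_ge0 => i _; apply: bigmax_ge0. Qed.

Lemma le_prox_maxdist x n (i j : 'I_k) : (i < j)%N ->
  `|iter n T (x i) - iter n T (x j)| <= prox_maxdist k T x n.
Proof.
move=> ltij; rewrite /prox_maxdist.
apply: le_trans _ (le_bigmax_ge0 _ (mem_index_enum i) isT); last first.
  by move=> i' _; apply: bigmax_ge0.
exact: le_bigmax_ge0 (mem_index_enum j) _.
Qed.

Lemma prox_maxdist_le x n c : 0 <= c ->
  (forall i j : 'I_k, (i < j)%N -> `|iter n T (x i) - iter n T (x j)| <= c) ->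
  prox_maxdist k T x n <= c.
Proof. by move=> c_ge0 le_c; do 2!apply: bigmax_le => // ? ?; exact: le_c. Qed.

Lemma prox_maxdist_le_add x n c : 0 <= c ->
  (forall i, `|iter n T (x i)| <= c) -> prox_maxdist k T x n <= c + c.
Proof.
move=> c_ge0 le_c; apply: prox_maxdist_le => [|i j _]; first exact: addr_ge0.
by apply: le_trans (ler_normB _ _) _; apply: lerD.
Qed.

End ProxMaxdist.

Section IterBound.
Variables (K : numFieldType) (X : normedModType K) (T : {linear X -> X}) (C : K).
Hypotheses (C_ge1 : 1 <= C) (iter_le : forall n x, `|iter n T x| <= C ^+ n * `|x|).
Variable k : nat.

Lemma prox_maxdist_iterD (x : 'I_k -> X) t m :
  prox_maxdist k T x (t + m) <= C ^+ t * prox_maxdist k T x m.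
Proof.
have Ct_ge0 : 0 <= C ^+ t by rewrite exprn_ge0 // (le_trans ler01).
apply: prox_maxdist_le => [|i j ltij]; first by rewrite mulr_ge0 ?prox_maxdist_ge0.
rewrite !iterD -iterB; apply: le_trans (iter_le _ _) _.
by rewrite ler_wpM2l // le_prox_maxdist.
Qed.

Lemma prox_maxdist_late (x : 'I_k -> X) N m :
  exists2 n, (N <= n)%N & prox_maxdist k T x n <= C ^+ N * prox_maxdist k T x m.
Proof.
have [leNm|ltmN] := leqP N m.
  by exists m => //; rewrite ler_peMl ?prox_maxdist_ge0 ?exprn_ege1.
exists N => //; rewrite -(subnK (ltnW ltmN)).
apply: le_trans (prox_maxdist_iterD _ _ _) _.
by rewrite ler_wpM2r ?prox_maxdist_ge0 // ler_weXn2l // leq_addr.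
Qed.

End IterBound.

Definition proximal (K : numDomainType) (X : normedModType K) (T : X -> X) k
    (x : 'I_k -> X) :=
  forall e : K, 0 < e -> forall N, exists2 n, (N <= n)%N & prox_maxdist k T x n < e.

Lemma limn_einf_eq0P (R : realType) (v : nat -> R) : (forall n, 0 <= v n) ->
  limn_einf (fun n => (v n)%:E) = 0%E <->
  (forall e, 0 < e -> forall N, exists2 n, (N <= n)%N & v n < e).
Proof.
move=> v_ge0; rewrite limn_einf_lim.
rewrite (cvg_lim _ (@cvg_einfs_sup R (fun n => (v n)%:E))) //.
have einfs_ge0 N : (0 <= einfs (fun n => (v n)%:E) N)%E.
  by apply: le_ereal_inf_tmp => _ [n _ <-]; rewrite lee_fin.
split.
- move=> sup0 e e_gt0 N; apply: contrapT => no_small.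
  have : (e%:E <= einfs (fun n => (v n)%:E) N)%E.
    apply: le_ereal_inf_tmp => _ [n /= leNn <-]; rewrite lee_fin leNgt.
    by apply/negP => ltve; apply: no_small; exists n.
  have : (einfs (fun n => (v n)%:E) N <= 0)%E.
    by rewrite -sup0; apply: ereal_sup_ubound; exists N.
  by move=> le_einfs0 /le_trans/(_ le_einfs0); rewrite lee_fin leNgt e_gt0.
- move=> small; apply/eqP; rewrite eq_le; apply/andP; split; last first.
    by apply: le_trans (einfs_ge0 0%N) _; apply: ereal_sup_ubound; exists 0%N.
  apply: ge_ereal_sup => _ [N _ <-]; apply/lee_addgt0Pr => e e_gt0.
  have [n leNn ltve] := small e e_gt0 N; rewrite add0e.
  apply: (@le_trans _ _ (v n)%:E); first by apply: ereal_inf_lbound; exists n.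
  by rewrite lee_fin ltW.
Qed.

Lemma ProxE (R : realType) (X : normedModType R) (T : {linear X -> X}) k :
  Prox k T = [set x | proximal T x].
Proof.
by apply/seteqP; split=> x; case: (limn_einf_eq0P (prox_maxdist_ge0 T x)).
Qed.

Lemma ProxCE (R : realType) (X : normedModType R[i]) (T : {linear X -> X}) k :
  ProxC k T = [set x | proximal T x].
Proof.
suff ProxCP x : ProxC k T x <-> proximal T x by apply/seteqP; split=> x /ProxCP.
have [Im0 Re_ge0] : (forall n, complex.Im (prox_maxdist k T x n) = 0) /\
                    (forall n, 0 <= complex.Re (prox_maxdist k T x n)).
  by split=> n; have := prox_maxdist_ge0 T x n; rewrite lecE => /andP[/eqP].
rewrite /ProxC /= limn_einf_eq0P //; split=> small e.
- rewrite ltcE => /andP[/eqP Im_e Re_e] N.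
  have [n leNn ltn] := small _ Re_e N; exists n => //.
  by rewrite ltcE Im0 Im_e eqxx ltn.
- move=> e_gt0 N; have [|n leNn] := small (e%:C)%C _ N; first by rewrite ltcR.
  by rewrite ltcE => /andP[_ ltn]; exists n.
Qed.

Section Boxes.
Variables (K : numFieldType) (X : normedModType K) (k : nat).

Definition box (a : 'I_k -> X) (d : K) : set {ptws 'I_k -> X} :=
  [set x | forall i, `|a i - x i| < d].

Lemma box_open a d : open (box a d).
Proof.
rewrite openE => x xb.
have FF : Filter (nbhs (x : {ptws 'I_k -> X})) by exact: nbhs_filter.
apply: (@filter_forall _ _ (fun i (y : {ptws 'I_k -> X}) => `|a i - y i| < d)
  _ FF) => i.
have : nbhs (x i) (ball (a i) d).
  apply: open_nbhs_nbhs; split; first exact: ball_open.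
  by rewrite -ball_normE; exact: xb.
move=> /(@proj_continuous _ (fun _ => X) i x).
have sub : proj i @^-1` ball (a i) d `<=`
           (fun y : {ptws 'I_k -> X} => `|a i - y i| < d).
  by move=> y; rewrite /= -ball_normE.
exact: filterS sub.
Qed.

Lemma box_nbhs (a : {ptws 'I_k -> X}) (O : set {ptws 'I_k -> X}) :
  nbhs a O -> exists2 d, 0 < d & box a d `<=` O.
Proof.
move=> aO; pose F := filter_from [set d : K | 0 < d] (box a).
have : Filter F.
  apply: filter_from_filter; first by exists 1; rewrite /= ltr01.
  move=> d1 d2 d1_gt0 d2_gt0.
  have d12 : d1 >=< d2 by rewrite real_comparable ?gtr0_real.
  exists (Num.min d1 d2); first by rewrite /= comparable_lt_min ?d1_gt0.
  by move=> x xb; split=> i; move: (xb i); rewrite comparable_lt_min // => /andP[].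
move=> F_filter; have : F --> a.
  apply/cvg_sup => i U [V] [[W] oW <-] WfN WU.
  have /nbhs_ballP[e /= e_gt0 eW] : nbhs (a i) W by apply: open_nbhs_nbhs.
  by exists e => // x xb; apply/WU/eW; rewrite -ball_normE; exact: xb.
by move=> /(_ O aO)[d]; exists d.
Qed.

Lemma dense_boxP (A : set {ptws 'I_k -> X}) :
  dense A <-> forall a d, 0 < d -> exists x, A x /\ box a d x.
Proof.
split=> [dA a d d_gt0|Abox O [a Oa] oO].
  have [|x [axd Ax]] := dA (box a d) _ (box_open a d); last by exists x.
  by exists a => i; rewrite subrr normr0.
have [d d_gt0 boxO] := box_nbhs (open_nbhs_nbhs (conj oO Oa)).
by have [x [Ax /boxO Ox]] := Abox a d d_gt0; exists x.
Qed.

End Boxes.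

Definition iter_null_on_dense (K : numDomainType) (X : normedModType K)
    (T : X -> X) :=
  exists (p : nat -> nat) (S : set X),
    dense S /\ forall x, S x -> (fun n => iter (p n) T x) @ \oo --> 0.

Lemma dense_proximal_of_iter_null (K : numFieldType) (X : normedModType K)
    (T : {linear X -> X}) :
  bounded_op T -> iter_null_on_dense T ->
  forall k, dense [set x : {ptws 'I_k -> X} | proximal T x].
Proof.
move=> /bounded_op_iter[C C_ge1 iter_le] [p [S [dS Snull]]] k.
apply/dense_boxP => a d d_gt0.
have /choice[s sS] : forall i, exists x, S x /\ `|a i - x| < d.
  move=> i; have [|s [ais Ss]] := dS (ball (a i) d) _ (ball_open _ _).
    by exists (a i); exact: ballxx.
  by exists s; rewrite -ball_normE in ais.
exists s; split=> [e e_gt0 N|i]; last exact: (sS i).2.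
have CN_gt0 : 0 < C ^+ N by rewrite exprn_gt0 // (lt_le_trans ltr01).
pose e' := e / (4 * C ^+ N).
have e'_gt0 : 0 < e' by rewrite divr_gt0 // mulr_gt0.
have [m sm_small] : exists m, forall i, `|iter (p m) T (s i)| <= e'.
  have : \forall n \near \oo, forall i, `|iter (p n) T (s i)| < e'.
    apply: filter_forall => i.
    have /cvgrPdist_lt/(_ e' e'_gt0) := Snull _ (sS i).1.
    by apply: filterS => n; rewrite sub0r normrN.
  by move=> [n0 _ /(_ n0 (leqnn n0)) small]; exists n0 => i; exact/ltW.
have [n leNn small_n] := prox_maxdist_late C_ge1 iter_le s N (p m).
exists n => //; apply: le_lt_trans small_n _.
have := prox_maxdist_le_add (ltW e'_gt0) sm_small.
move=> /(ler_wpM2l (ltW CN_gt0)) /le_lt_trans; apply.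
have -> : C ^+ N * (e' + e') = e / 2 by rewrite /e'; field; rewrite gt_eqF.
by rewrite ltr_pdivrMr // ltr_pMr // ltr1n.
Qed.

Definition perturb_null (K : numDomainType) (X : normedModType K) (T : X -> X) :=
  forall M (a : nat -> X) (d e : K), 0 < d -> 0 < e ->
  exists (y : nat -> X) (n : nat), [/\ forall j, `|y j - a j| < d,
    forall j, (M <= j)%N -> y j = a j &
    forall j, (j < M)%N -> `|iter n T (y j)| < e].

Lemma perturb_null_of_dense_proximal (K : numFieldType) (X : normedModType K)
    (T : {linear X -> X}) :
  (forall k, (2 <= k)%N -> dense [set x : {ptws 'I_k -> X} | proximal T x]) ->
  perturb_null T.
Proof.
move=> prox_dense M a d e d_gt0 e_gt0.
pose a' (i : 'I_M.+2) := if (i < M)%N then a i else 0.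
have [x [prox_x x_near]] :=
  (dense_boxP _).1 (prox_dense M.+2 isT) a' (d / 2) (divr_gt0 d_gt0 (ltr0n _ 2)).
have [n _ small_n] := prox_x e e_gt0 0%N.
(* [z] is near 0, and proximity makes [T^n (x_j - z)] small for all [j] at once *)
pose z := x ord_max.
have z_small : `|z| < d / 2.
  by have := x_near ord_max; rewrite /a' /= ltnNge leqnSn sub0r normrN.
exists (fun j => if (j < M)%N then x (inord j) - z else a j), n; split.
- move=> j; case: ifP => ltjM; last by rewrite subrr normr0.
  have ltjM2 : (j < M.+2)%N by rewrite (leq_trans ltjM) // -addn2 leq_addr.
  have := x_near (inord j); rewrite /a' inordK // ltjM distrC => xj_near.
  rewrite addrAC; apply: le_lt_trans (ler_normB _ _) _.
  by rewrite (splitr d) ltrD.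
- by move=> j; rewrite leqNgt => /negbTE ->.
- move=> j ltjM; rewrite ltjM iterB; apply: le_lt_trans small_n.
  by apply: le_prox_maxdist; rewrite /= inordK ?(ltn_trans ltjM).
Qed.

Lemma logn2_expn_odd a J : logn 2 (2 ^ a * J.*2.+1) = a.
Proof.
rewrite lognM ?expn_gt0 // pfactorK // (_ : logn 2 J.*2.+1 = 0%N) ?addn0 //.
by rewrite lognE dvdn2 /= odd_double.
Qed.

Lemma separable_seq_often (K : numFieldType) (X : normedModType K) :
  separable X -> exists d : nat -> X, forall (z : X) (r : K), 0 < r ->
    forall J, exists2 j, (J <= j)%N & `|z - d j| < r.
Proof.
move=> [D [/countable_injP[f f_inj] dD]].
(* enumerate [D] through [f] along the 2-adic valuation, which takes each value
   at arbitrarily large arguments *)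
exists (fun j => xget 0 [set y | D y /\ f y = logn 2 j.+1]) => z r r_gt0 J.
have [|y [zy Dy]] := dD (ball z r) _ (ball_open _ _).
  by exists z; exact: ballxx.
exists (2 ^ f y * J.*2.+1).-1.
  rewrite -ltnS prednK ?muln_gt0 ?expn_gt0 //.
  rewrite (leq_trans _ (leq_pmull _ _)) ?expn_gt0 //.
  by rewrite ltnS -addnn leq_addr.
rewrite prednK ?muln_gt0 ?expn_gt0 // logn2_expn_odd.
have [] := xgetPex 0 (ex_intro (fun y' => D y' /\ f y' = f y) y (conj Dy erefl)).
by move=> Dy' /f_inj -> //; [rewrite -ball_normE in zy | rewrite inE | rewrite inE].
Qed.

Lemma dependent_choice_nat (S : Type) (P : S -> Prop) (R : nat -> S -> S -> Prop)
    (s0 : S) :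
  P s0 -> (forall m s, P s -> exists2 s', P s' & R m s s') ->
  exists f : nat -> S, f 0%N = s0 /\ forall m, P (f m) /\ R m (f m) (f m.+1).
Proof.
move=> Ps0 next.
have /choice[g gP] :
    forall ms : nat * S, exists s', P ms.2 -> P s' /\ R ms.1 ms.2 s'.
  move=> [m s]; have [/(next m)[s' Ps' Rs']|nPs] := pselect (P s).
    by exists s'.
  by exists s.
pose f := fix f m := if m is m'.+1 then g (m', f m') else s0.
have Pf m : P (f m) by elim: m => //= m /(gP (m, _))[].
by exists f; split=> // m; split; [exact: Pf | have [] := gP (m, f m) (Pf m)].
Qed.

Section Construction.
Variables (K : numFieldType) (X : completeNormedModType K) (T : {linear X -> X}).
Hypothesis arch : forall e : K, 0 < e -> exists m : nat, m.+1%:R^-1 < e.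
Variable C : K.
Hypotheses (C_ge1 : 1 <= C) (iter_le : forall n x, `|iter n T x| <= C ^+ n * `|x|).

Let eps (m : nat) : K := m.+1%:R^-1.

Let eps_gt0 m : 0 < eps m. Proof. by rewrite invr_gt0. Qed.

Let eps_nonincr m n : (m <= n)%N -> eps n <= eps m.
Proof. by move=> le_mn; rewrite lef_pV2 ?posrE ?ler_nat. Qed.

Record stage := Stage { vec : nat -> X; rad : K; time : nat }.

Definition next_stage m (s s' : stage) :=
  [/\ forall j, `|vec s' j - vec s j| <= rad s - rad s',
      forall j, (m < j)%N -> vec s' j = vec s j,
      forall j, (j <= m)%N -> `|iter (time s') T (vec s' j)| < eps m / 2
    & C ^+ time s' * (2 * rad s') <= eps m / 2].

Lemma next_stage_exists : perturb_null T ->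
  forall m s, 0 < rad s -> exists2 s', 0 < rad s' & next_stage m s s'.
Proof.
move=> perturb m s r_gt0.
have [y [n [y_near y_fix y_small]]] := perturb m.+1 (vec s) (rad s / 2) (eps m / 2)
  (divr_gt0 r_gt0 (ltr0n _ 2)) (divr_gt0 (eps_gt0 m) (ltr0n _ 2)).
have Cn_gt0 : 0 < C ^+ n by rewrite exprn_gt0 // (lt_le_trans ltr01).
have eCn_gt0 : 0 < eps m / (4 * C ^+ n) by rewrite divr_gt0 ?mulr_gt0.
have r2_gt0 : 0 < rad s / 2 by rewrite divr_gt0.
have cmp : rad s / 2 >=< eps m / (4 * C ^+ n) by rewrite real_comparable ?gtr0_real.
pose r' := Num.min (rad s / 2) (eps m / (4 * C ^+ n)).
have r'_gt0 : 0 < r' by rewrite comparable_lt_min ?r2_gt0.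
have r'_le_r : r' <= rad s / 2 by rewrite comparable_ge_min ?lexx.
have r'_le_e : r' <= eps m / (4 * C ^+ n) by rewrite comparable_ge_min ?lexx ?orbT.
exists (Stage y r' n) => //; split=> /=.
- move=> j; apply: ltW; apply: lt_le_trans (y_near j) _.
  by rewrite lerBrDr {2}(splitr (rad s)) lerD2l.
- exact: y_fix.
- exact: y_small.
- apply: le_trans (ler_wpM2l (ltW Cn_gt0) (ler_wpM2l (ler0n _ 2) r'_le_e)) _.
  by have -> : C ^+ n * (2 * (eps m / (4 * C ^+ n))) = eps m / 2
    by field; rewrite gt_eqF.
Qed.

Definition stage_lim (s : nat -> stage) j := lim ((fun t => vec (s t) j) @ \oo).

Section StageSequence.
Variable s : nat -> stage.
Hypotheses (rad_gt0 : forall m, 0 < rad (s m))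
  (s_next : forall m, next_stage m (s m) (s m.+1)).

Lemma rad_le_eps m : 2 * rad (s m.+1) <= eps m / 2.
Proof.
have [_ _ _ le_eps] := s_next m; apply: le_trans le_eps.
by apply: ler_peMl; [rewrite mulr_ge0 ?ltW | exact: exprn_ege1].
Qed.

Lemma vec_dist_le t u j : (t <= u)%N ->
  `|vec (s u) j - vec (s t) j| <= rad (s t) - rad (s u).
Proof.
move/subnK <-; elim: (u - t)%N => [|i IH]; first by rewrite add0n !subrr normr0.
have [step _ _ _] := s_next (i + t).
rewrite addSn -(subrK (vec (s (i + t)%N) j) (vec _ j)) -addrA.
apply: le_trans (ler_normD _ _) _; apply: le_trans (lerD (step j) IH) _.
by rewrite addrC addrA subrK.
Qed.

Lemma vec_settled t j : (t <= j)%N -> vec (s t) j = vec (s 0%N) j.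
Proof.
elim: t => // t IH lt_tj; have [_ fixed _ _] := s_next t.
by rewrite fixed // IH // ltnW.
Qed.

Lemma cvg_stage_vec j : cvg ((fun t => vec (s t) j) @ \oo).
Proof.
apply/cauchy_cvgP/cauchy_exP => e e_gt0.
have [m eps_m] := arch (mulr_gt0 e_gt0 (ltr0n _ 2)).
exists (vec (s m.+1) j), m.+1 => // u /= le_mu.
rewrite -ball_normE /= distrC; apply: le_lt_trans (vec_dist_le j le_mu) _.
apply: le_lt_trans (_ : _ <= rad (s m.+1)) _; first by rewrite gerBl ltW.
apply: le_lt_trans (ler_peMl (ltW (rad_gt0 _)) (_ : 1 <= 2)) _.
  by rewrite ler1n.
by apply: le_lt_trans (rad_le_eps m) _; rewrite ltr_pdivrMr.
Qed.

Lemma stage_lim_near t j : `|vec (s t) j - stage_lim s j| < 2 * rad (s t).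
Proof.
have r2_gt0 : 0 < 2 * rad (s t) by rewrite mulr_gt0.
suff : closed_ball (vec (s t) j) (2 * rad (s t) / 2) (stage_lim s j).
  by move/(subset_closure_half r2_gt0); rewrite -ball_normE.
have limP : (fun u => vec (s u) j) @ \oo --> stage_lim s j := @cvg_stage_vec j.
apply: (@closed_cvg _ _ \oo _ _ _ (@closed_ball_closed _ _ _ _) _ _ limP).
exists t => // u /= le_tu; apply: subset_closed_ball.
rewrite (mulrC 2) mulfK ?pnatr_eq0 // -ball_normE /= distrC.
apply: le_lt_trans (vec_dist_le j le_tu) _.
by rewrite ltrBlDr ltrDl.
Qed.

Lemma iter_stage_lim_small m j : (j <= m)%N ->
  `|iter (time (s m.+1)) T (stage_lim s j)| < eps m.
Proof.
move=> le_jm; have [_ _ small le_eps] := s_next m.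
set n := time (s m.+1).
rewrite -(subKr (iter n T (vec (s m.+1) j)) (iter n T (stage_lim s j))) -iterB.
apply: le_lt_trans (ler_normB _ _) _; rewrite (splitr (eps m)) ltr_leD ?small //.
apply: le_trans (iter_le _ _) _.
apply: le_trans (ler_wpM2l _ (ltW (stage_lim_near _ _))) le_eps.
by rewrite exprn_ge0 // (le_trans ler01).
Qed.

Lemma stage_lim_dense :
  (forall z r, 0 < r ->
     forall J, exists2 j, (J <= j)%N & `|z - vec (s 0%N) j| < r) ->
  dense (range (stage_lim s)).
Proof.
move=> often O [z Oz] oO.
have /nbhs_ballP[r /= r_gt0 rO] : nbhs z O by exact: open_nbhs_nbhs.
have [J eps_J] := arch r_gt0.
have [[|j] // leJj near_j] := often z (r / 2) (divr_gt0 r_gt0 (ltr0n _ 2)) J.+1.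
exists (stage_lim s j.+1); split; last by exists j.+1.
apply: rO; rewrite -ball_normE /= -(subrK (vec (s 0%N) j.+1) z) -addrA.
apply: le_lt_trans (ler_normD _ _) _; rewrite (splitr r) ltrD //.
rewrite -(vec_settled (leqnn j.+1)); apply: lt_le_trans (stage_lim_near _ _) _.
apply: le_trans (rad_le_eps j) _; apply: ltW.
rewrite ltr_pM2r ?invr_gt0 //.
exact: le_lt_trans (eps_nonincr (m:=J) leJj) eps_J.
Qed.

End StageSequence.

Theorem iter_null_of_perturb_null :
  separable X -> perturb_null T -> iter_null_on_dense T.
Proof.
move=> sepX perturb; have [d d_often] := separable_seq_often sepX.
have [s [s0 s_next]] := @dependent_choice_nat _ (fun s => 0 < rad s) next_stage
  (Stage d 1 0) ltr01 (next_stage_exists perturb).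
have rad_gt0 m : 0 < rad (s m) := (s_next m).1.
have next m : next_stage m (s m) (s m.+1) := (s_next m).2.
exists (fun m => time (s m.+1)), (range (stage_lim s)); split.
  by apply: stage_lim_dense rad_gt0 next _; rewrite s0.
move=> _ [j _ <-]; apply/cvgrPdist_lt => e e_gt0; have [m eps_m] := arch e_gt0.
exists (maxn j m) => // n /= le_n; rewrite sub0r normrN.
apply: lt_le_trans (iter_stage_lim_small rad_gt0 next _) _.
  by rewrite (leq_trans _ le_n) ?leq_maxl.
apply: le_trans (eps_nonincr _) (ltW eps_m).
by rewrite (leq_trans _ le_n) ?leq_maxr.
Qed.

End Construction.

Lemma dense_proximal_iff_iter_null (K : numFieldType)
    (X : completeNormedModType K) (T : {linear X -> X}) :
  (forall e : K, 0 < e -> exists m : nat, m.+1%:R^-1 < e) ->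
  separable X -> bounded_op T ->
  (forall k, (2 <= k)%N -> dense [set x : {ptws 'I_k -> X} | proximal T x]) <->
  iter_null_on_dense T.
Proof.
move=> arch sepX bT; have [C C_ge1 iter_le] := bounded_op_iter bT; split.
- move/perturb_null_of_dense_proximal.
  exact: (iter_null_of_perturb_null arch C_ge1 iter_le sepX).
- by move=> /(dense_proximal_of_iter_null bT) prox_dense k _.
Qed.

Lemma natSinv_lt_real (R : realType) (e : R) : 0 < e ->
  exists m : nat, m.+1%:R^-1 < e.
Proof.
move=> e_gt0; have [m _ lt_e] := near_infty_natSinv_lt (PosNum e_gt0).
by exists m; apply: lt_e => /=.
Qed.

Lemma natSinv_lt_complex (R : realType) (e : R[i]) : 0 < e ->
  exists m : nat, m.+1%:R^-1 < e.
Proof.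
rewrite ltcE => /andP[/eqP Im_e /natSinv_lt_real[m lt_e]]; exists m.
have -> : (m.+1%:R : R[i])^-1 = ((m.+1%:R^-1 : R)%:C)%C.
  by rewrite fmorphV rmorph_nat.
by rewrite ltcE /= Im_e lt_e andbT.
Qed.

Theorem lemma3p3 (R : realType) :
  (* case K = R *)
  (forall (X : completeNormedModType R) (T : {linear X -> X}),
     separable X -> bounded_op T ->
     ((forall k : nat, (2 <= k)%N -> dense (Prox k T)) <->
      (exists (p : nat -> nat) (S : set X),
         dense S /\ forall x, S x -> (fun n => iter (p n) T x) @ \oo --> 0)))
  /\
  (* case K = C *)
  (forall (X : completeNormedModType R[i]) (T : {linear X -> X}),
     separable X -> bounded_op T ->
     ((forall k : nat, (2 <= k)%N -> dense (ProxC k T)) <->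
      (exists (p : nat -> nat) (S : set X),
         dense S /\ forall x, S x -> (fun n => iter (p n) T x) @ \oo --> 0))).
Proof.
split=> X T sepX bT.
- apply: iff_trans (dense_proximal_iff_iter_null (@natSinv_lt_real R) sepX bT).
  by split=> dense_P k /dense_P; rewrite ProxE.
- apply: iff_trans (dense_proximal_iff_iter_null (@natSinv_lt_complex R) sepX bT).
  by split=> dense_P k /dense_P; rewrite ProxCE.
Qed.
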